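(* Let $G$ be a topological group with identity $e$, and let $k\ge1$ be an integer. The following statements are equivalent: (1) $G$ is a functional Alexandroff space; (1') $G$ is a $k$-primal space; (2) $V(e)$ is open and finite; (3) there exist a finite topological group $E$ carrying the indiscrete topology and a topological group $F$ carrying the discrete topology such that $E\times F$ and $G$ are homeomorphic topological spaces; (4) there exist a finite topological space $E$ with the indiscrete topology and a discrete topological space $F$ such that $E\times F$ and $G$ are homeomorphic topological spaces.
   Context: For a topological space $X$ and $a\in X$, $V(a):=\bigcap\{U: U\text{ open}, a\in U\}$. For $f:X\to X$ and $a\in X$, $V_f(a):=\{x\in X:\exists n\ge0,\ f^n(x)=a\}$; $X$ is a functional Alexandroff space if for some $f:X\to X$ the topology with basis $\{V_f(a):a\in X\}$ equals the topology of $X$. $X$ is $k$-primal if there are $f_1,\dots,f_k:X\to X$ such that for every $a\in X$ the set $V_{f_1}(a)\cap\dots\cap V_{f_k}(a)$ is open and is the smallest open neighbourhood of $a$. The indiscrete topology on a set has only the empty set and the whole set as open sets. *)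

From HB Require Import structures.
From mathcomp Require Import all_boot all_order all_algebra.
From mathcomp Require Import all_classical all_reals topology.
Set Implicit Arguments. Unset Strict Implicit. Unset Printing Implicit Defensive.
Local Open Scope classical_set_scope.

Definition is_topgroup (T : topologicalType) (mul : T -> T -> T) (inv : T -> T)
    (e : T) : Prop :=
  [/\ (forall x y z, mul x (mul y z) = mul (mul x y) z),
      (forall x, mul e x = x /\ mul x e = x),
      (forall x, mul (inv x) x = e /\ mul x (inv x) = e),
      continuous (fun p : T * T => mul p.1 p.2) &
      continuous inv].

Definition Vmin (T : topologicalType) (a : T) : set T :=
  [set x | forall U : set T, open U -> U a -> U x].

Definition Vf (T : Type) (f : T -> T) (a : T) : set T :=
  [set x | exists n : nat, iter n f x = a].

Definition functional_alexandroff (T : topologicalType) : Prop :=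
  exists f : T -> T, forall U : set T,
    open U <-> (forall x, U x -> exists a, Vf f a x /\ Vf f a `<=` U).

Definition k_primal (k : nat) (T : topologicalType) : Prop :=
  exists fs : 'I_k -> T -> T, forall a : T,
    open [set x | forall i, Vf (fs i) a x] /\
    [set x | forall i, Vf (fs i) a x] = Vmin a.

Definition indiscrete (T : topologicalType) : Prop :=
  forall A : set T, open A -> A = set0 \/ A = setT.

Definition discrete (T : topologicalType) : Prop :=
  forall A : set T, open A.

Definition homeomorphic (X Y : topologicalType) : Prop :=
  exists (f : X -> Y) (g : Y -> X),
    [/\ cancel f g, cancel g f, continuous f & continuous g].

From HB Require Import structures.
From mathcomp Require Import all_boot all_order all_algebra.
From mathcomp Require Import all_classical all_reals topology.
Local Open Scope classical_set_scope.

(* In a topological group the specialization preorder x in V(a) is symmetric,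
   since the homeomorphism y |-> x y^-1 a exchanges a and x; hence the sets V(x)
   are the cosets of the subgroup V(e) and partition G. If V(e) is open and
   finite, choosing one point in each coset makes G homeomorphic to
   V(e) x G/V(e), with V(e) indiscrete and G/V(e) discrete, and both factors
   are topological groups. In such a product every V(p) is a finite open class,
   and a space partitioned into finite open classes is functional Alexandroff:
   take f to run cyclically through each class. Conversely, in a k-primal group
   any single f_i reaches e from every point of V(e) and, by symmetry, reaches
   every point of V(e) from e, so V(e) lies on one f_i-cycle and is finite. *)

Section Specialization.
Context {T : topologicalType}.
Implicit Types (a x y : T) (U : set T).

Lemma Vmin_refl a : Vmin a a.
Proof. by []. Qed.

Lemma Vmin_trans {a x y} : Vmin a x -> Vmin x y -> Vmin a y.
Proof. by move=> ax xy U oU Ua; apply: xy => //; apply: ax. Qed.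

Lemma Vmin_eq {a x} : Vmin a x -> Vmin x a -> Vmin x = Vmin a.
Proof.
by move=> ax xa; rewrite predeqE => y; split; apply: Vmin_trans.
Qed.

Lemma Vmin_nbhs {a U} : nbhs a U -> Vmin a `<=` U.
Proof. by rewrite nbhsE => -[W [oW Wa] WU] x /(_ W oW Wa) /WU. Qed.

Lemma open_of_open_nbhs U :
  (forall x, U x -> exists2 W, open_nbhs x W & W `<=` U) -> open U.
Proof. by move=> hU; rewrite openE => x Ux; rewrite /interior nbhsE; apply: hU. Qed.

End Specialization.

Definition alexandroff_space (T : topologicalType) := forall a : T, open (Vmin a).

Lemma continuous_Vmin {S T : topologicalType} {h : S -> T} {a x : S} :
  continuous h -> Vmin a x -> Vmin (h a) (h x).
Proof. by move=> /continuousP ch ax U oU; exact: (ax (h @^-1` U) (ch U oU)). Qed.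

Lemma Vmin_continuous {S T : topologicalType} {h : S -> T} :
  alexandroff_space S -> (forall a x, Vmin a x -> Vmin (h a) (h x)) ->
  continuous h.
Proof.
move=> alexS h_mono; apply/continuousP => U oU.
apply: open_of_open_nbhs => a Uha; exists (Vmin a); first by split.
by move=> x /h_mono; apply.
Qed.

Lemma open_setX {S T : topologicalType} {A : set S} {B : set T} :
  open A -> open B -> open (A `*` B).
Proof. by rewrite !openE => oA oB -[a b] [/oA Aa /oB Bb]; exists (A, B). Qed.

Lemma Vmin_pair {S T : topologicalType} (a : S) (b : T) :
  Vmin (a, b) = Vmin a `*` Vmin b.
Proof.
rewrite predeqE => -[x y]; split.
  move=> h; split=> U oU Ua.
  - by have [] := h (U `*` setT) (open_setX oU openT).
  - by have [] := h (setT `*` U) (open_setX openT oU).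
move=> [ax yb] U; rewrite openE => oU /oU [[P Q] /= [aP bQ] PQU].
by apply: PQU; split; [exact: Vmin_nbhs aP _ ax | exact: Vmin_nbhs bQ _ yb].
Qed.

Lemma Vmin_indiscrete {T : topologicalType} (a : T) : indiscrete T -> Vmin a = setT.
Proof.
move=> indT; rewrite predeqE => x; split=> // _ U /indT[->|->] //.
Qed.

Lemma Vmin_discrete {T : topologicalType} (a : T) : discrete T -> Vmin a = [set a].
Proof.
move=> discT; rewrite predeqE => x; split=> [|->]; last exact: Vmin_refl.
by apply; [exact: discT | ].
Qed.

Lemma Vmin_indiscrete_discrete {E F : topologicalType} (a : E) (y : F) :
  indiscrete E -> discrete F -> Vmin (a, y) = setT `*` [set y].
Proof. by move=> indE discF; rewrite Vmin_pair Vmin_indiscrete // Vmin_discrete. Qed.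

Lemma discrete_prod {S T : topologicalType} :
  discrete S -> discrete T -> discrete (S * T)%type.
Proof.
move=> discS discT A; apply: open_of_open_nbhs => -[a b] Aab.
exists ([set a] `*` [set b]); first by split; [exact: open_setX | ].
by move=> -[x y] [/= -> ->].
Qed.

Lemma continuous_from_discrete {S T : topologicalType} {h : S -> T} :
  discrete S -> continuous h.
Proof. by move=> discS; apply/continuousP => U _; apply: discS. Qed.

Lemma continuous_to_indiscrete {S T : topologicalType} {h : S -> T} :
  indiscrete T -> continuous h.
Proof.
move=> indT; apply/continuousP => U /indT[->|->].
- by rewrite preimage_set0; exact: open0.
- by rewrite preimage_setT; exact: openT.
Qed.

Definition indiscrete_topology (T : Type) : Type := T.

Section IndiscreteTopology.
Variable T : choiceType.

Let trivial_open (A : set T) := A = set0 \/ A = setT.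

Let trivial_openT : trivial_open setT.
Proof. by right. Qed.

Let trivial_openI : setI_closed trivial_open.
Proof.
move=> A B [->|->] [->|->]; rewrite ?set0I ?setI0 ?setIT ?setTI;
  by [left | right].
Qed.

Let trivial_open_bigcup (I : Type) (f : I -> set T) :
  (forall i, trivial_open (f i)) -> trivial_open (\bigcup_i f i).
Proof.
move=> fI; have [[i fiT]|] := pselect (exists i, f i = setT).
  by right; apply/seteqP; split=> // x _; exists i; rewrite ?fiT.
move=> /forallNP fN; left; apply/seteqP; split=> // x [i _].
by case: (fI i) (fN i) => ->.
Qed.

HB.instance Definition _ := Choice.copy (indiscrete_topology T) T.
HB.instance Definition _ := isOpenTopological.Build (indiscrete_topology T)
  trivial_openT trivial_openI trivial_open_bigcup.

Lemma indiscrete_topologyP : indiscrete (indiscrete_topology T).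
Proof. by []. Qed.

End IndiscreteTopology.

Lemma discrete_topologyP (T : choiceType) : discrete (discrete_topology T).
Proof. exact: discrete_open. Qed.

Lemma iter_next_reach {T : eqType} {p : seq T} {x y : T} :
  uniq p -> x \in p -> y \in p -> exists n, iter n (next p) x = y.
Proof.
move=> Up /rot_to[i q rip] yp.
have Uxq : uniq (x :: q) by rewrite -rip rot_uniq.
have next_xq : next (x :: q) =1 next p by rewrite -rip; exact: next_rot.
have /fpathE traj_q := cycle_next Uxq.
have : y \in traject (next (x :: q)) x (size q).+2.
  rewrite trajectS -(size_rcons q x) -traj_q -cats1 -cat_cons mem_cat.
  by rewrite -rip mem_rot yp.
by case/trajectP=> n _ ->; exists n; rewrite (eq_iter next_xq).
Qed.

Definition finite_open_class {T : topologicalType} (p : T) :=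
  [/\ open (Vmin p), finite_set (Vmin p) & forall x, Vmin p x -> Vmin x p].

Section FunctionalAlexandroffOfClasses.
Context {T : topologicalType}.
Hypothesis classT : forall p : T, finite_open_class p.

Let class_sym {a x : T} : Vmin a x -> Vmin x a.
Proof. by case: (classT a) => _ _; apply. Qed.

Definition enumV (a : T) : seq T :=
  xget [::] (fun s : seq T => uniq s /\ [set` s] = Vmin a).

Lemma enumV_spec (a : T) : uniq (enumV a) /\ [set` enumV a] = Vmin a.
Proof.
apply: (@xgetPex _ [::] (fun s : seq T => uniq s /\ [set` s] = Vmin a)).
have [_ /finite_seqP[s ->] _] := classT a.
exists (undup s); split; first exact: undup_uniq.
by rewrite predeqE => y /=; rewrite mem_undup.
Qed.

Lemma mem_enumV (a y : T) : (y \in enumV a) <-> Vmin a y.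
Proof. by case: (enumV_spec a) => _ <-. Qed.

Lemma enumV_Vmin {a x : T} : Vmin a x -> enumV x = enumV a.
Proof. by move=> ax; rewrite /enumV (Vmin_eq ax (class_sym ax)). Qed.

Definition succV (x : T) : T := next (enumV x) x.

Lemma Vmin_succV (x : T) : Vmin x (succV x).
Proof. by apply/mem_enumV; rewrite mem_next; apply/mem_enumV. Qed.

Lemma Vf_succV (a : T) : Vf succV a = Vmin a.
Proof.
rewrite predeqE => x; split.
  move=> [n <-]; elim: n => [|n IHn] /=; first exact: Vmin_refl.
  exact: Vmin_trans (class_sym (Vmin_succV _)) IHn.
move=> ax; have [Ua _] := enumV_spec a.
have iter_succV n : iter n succV x = iter n (next (enumV a)) x /\
                    iter n (next (enumV a)) x \in enumV a.
  elim: n => [|n [IHeq IHin]] /=; first by split=> //; apply/mem_enumV.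
  rewrite IHeq mem_next IHin /succV; split=> //.
  by rewrite (enumV_Vmin (proj1 (mem_enumV _ _) IHin)).
have [x_in a_in] := conj ((mem_enumV _ _).2 ax) ((mem_enumV _ _).2 (Vmin_refl a)).
have [n xa] := iter_next_reach Ua x_in a_in.
by exists n; rewrite (iter_succV n).1.
Qed.

Lemma functional_alexandroff_of_classes : functional_alexandroff T.
Proof.
exists succV => U; split.
  move=> oU x Ux; exists x; rewrite Vf_succV; split; first exact: Vmin_refl.
  by move=> y; apply.
move=> hU; apply: open_of_open_nbhs => x /hU[a]; rewrite Vf_succV => -[ax aU].
by exists (Vmin a) => //; split=> //; case: (classT a).
Qed.

End FunctionalAlexandroffOfClasses.

Section FunctionalAlexandroff.
Context {T : topologicalType} {f : T -> T}.
Hypothesis hf : forall U : set T,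
  open U <-> (forall x, U x -> exists a, Vf f a x /\ Vf f a `<=` U).

Lemma Vf_refl (a : T) : Vf f a a.
Proof. by exists 0%N. Qed.

Lemma open_Vf (a : T) : open (Vf f a).
Proof. by apply/(hf (Vf f a)) => x ax; exists a; split. Qed.

Lemma Vf_Vmin (a : T) : Vf f a = Vmin a.
Proof.
rewrite predeqE => x; split=> [[n fnx] U oU Ua | ax].
  have [b [[m fma] bU]] := (hf U).1 oU a Ua.
  by apply: bU; exists (m + n)%N; rewrite iterD fnx.
exact: ax _ (open_Vf a) (@Vf_refl a).
Qed.

End FunctionalAlexandroff.

Lemma functional_alexandroff_k_primal {T : topologicalType} {k : nat} :
  (0 < k)%N -> functional_alexandroff T -> k_primal k T.
Proof.
move=> k_gt0 [f hf]; exists (fun _ => f) => a.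
have -> : [set x | forall i : 'I_k, Vf f a x] = Vf f a.
  by rewrite predeqE => x; split=> [/(_ (Ordinal k_gt0)) | fax i].
by split; [exact: open_Vf | exact: Vf_Vmin].
Qed.

Lemma finite_cycle_through {T : Type} (f : T -> T) (a : T) :
  finite_set [set b | (exists m, iter m f a = b) /\ exists n, iter n f b = a].
Proof.
have [[p [p_gt0 fpa]]|aperiodic] := pselect (exists p, (0 < p)%N /\ iter p f a = a).
  have fqpa q : iter (q * p) f a = a by elim: q => //= q IHq; rewrite mulSn iterD IHq fpa.
  apply: (sub_finite_set _ (finite_image (fun i => iter i f a) (finite_II p))).
  move=> b [[m <-] _]; exists (m %% p)%N; first by rewrite /= ltn_pmod.
  by rewrite {2}(divn_eq m p) addnC iterD fqpa.
apply: (sub_finite_set _ (finite_set1 a)) => b [[m fma] [n fnb]].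
case: (posnP (n + m)) => [/eqP|nm_gt0].
  by rewrite addn_eq0 => /andP[_ /eqP m0]; rewrite -fma m0.
by case: aperiodic; exists (n + m)%N; rewrite iterD fma fnb.
Qed.

Lemma k_primal_Vmin {T : topologicalType} {k : nat} {e : T} : (0 < k)%N ->
  (forall x, Vmin e x -> Vmin x e) ->
  k_primal k T -> open (Vmin e) /\ finite_set (Vmin e).
Proof.
move=> k_gt0 e_sym [fs hfs]; have [oVe Ve] := hfs e.
split; first by rewrite -Ve.
pose i0 := Ordinal k_gt0.
apply: sub_finite_set (finite_cycle_through (fs i0) e) => b eb; split.
  by move: (e_sym b eb); rewrite -(hfs b).2 => /(_ i0).
by move: eb; rewrite -Ve => /(_ i0).
Qed.

Section Homeomorphism.
Context {S T : topologicalType} {h : S -> T} {g : T -> S}.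
Hypotheses (hK : cancel h g) (gK : cancel g h).
Hypotheses (h_cont : continuous h) (g_cont : continuous g).

Lemma Vmin_homeo (p : S) : Vmin (h p) = h @` Vmin p.
Proof.
rewrite predeqE => y; split=> [hpy | [x px <-]]; last exact: continuous_Vmin.
by exists (g y); [rewrite -[p]hK; exact: continuous_Vmin | rewrite gK].
Qed.

Lemma finite_open_class_homeo (p : S) : finite_open_class p -> finite_open_class (h p).
Proof.
case=> oVp fVp p_sym; rewrite /finite_open_class Vmin_homeo; split.
- have -> : h @` Vmin p = g @^-1` Vmin p.
    rewrite predeqE => y; split=> [[x px <-] | gyp]; first by rewrite /= hK.
    by exists (g y); rewrite ?gK.
  by move/continuousP : g_cont; apply.
- exact: finite_image.
- by move=> _ [x px <-]; exact: continuous_Vmin h_cont (p_sym x px).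
Qed.

End Homeomorphism.

Lemma finite_open_class_product {E F : topologicalType} {p : E * F} :
  finite_set [set: E] -> indiscrete E -> discrete F -> finite_open_class p.
Proof.
case: p => a y finE indE discF.
rewrite /finite_open_class Vmin_indiscrete_discrete //; split.
- exact: open_setX (@openT E) (discF _).
- exact: finite_setX finE (finite_set1 y).
- by move=> -[b z] [_ /= ->]; rewrite Vmin_indiscrete_discrete.
Qed.

Lemma functional_alexandroff_of_product {G E F : topologicalType} :
  finite_set [set: E] -> indiscrete E -> discrete F ->
  homeomorphic (E * F)%type G -> functional_alexandroff G.
Proof.
move=> finE indE discF [h [g [hK gK h_cont g_cont]]].
apply: functional_alexandroff_of_classes => x; rewrite -(gK x).
exact/(finite_open_class_homeo hK gK h_cont g_cont)/finite_open_class_product.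
Qed.

Definition indiscrete_discrete_group_product (G : topologicalType) : Prop :=
  exists (E F : topologicalType) (mulE : E -> E -> E) (invE : E -> E) (eE : E)
         (mulF : F -> F -> F) (invF : F -> F) (eF : F),
    [/\ is_topgroup mulE invE eE /\ is_topgroup mulF invF eF,
        finite_set [set: E], indiscrete E, discrete F &
        homeomorphic (E * F)%type G].

Section TopologicalGroup.
Context {G : topologicalType} {mul : G -> G -> G} {inv : G -> G} {e : G}.
Hypothesis hG : is_topgroup mul inv e.

Let mulA x y z : mul x (mul y z) = mul (mul x y) z. Proof. by case: hG. Qed.
Let mul1g x : mul e x = x. Proof. by case: hG => _ /(_ x)[]. Qed.
Let mulg1 x : mul x e = x. Proof. by case: hG => _ /(_ x)[]. Qed.
Let mulVg x : mul (inv x) x = e. Proof. by case: hG => _ _ /(_ x)[]. Qed.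
Let mulgV x : mul x (inv x) = e. Proof. by case: hG => _ _ /(_ x)[]. Qed.
Let inv_cont : continuous inv. Proof. by case: hG. Qed.
Let inv1 : inv e = e. Proof. by rewrite -[inv e]mul1g mulgV. Qed.

Lemma continuous_mul {f g : G -> G} : continuous f -> continuous g ->
  continuous (fun x => mul (f x) (g x)).
Proof.
move=> f_cont g_cont x; case: hG => _ _ _ mul_cont _.
exact: continuous_comp (cvg_pair (f_cont x) (g_cont x)) (mul_cont _).
Qed.

Lemma continuous_mull (a : G) : continuous (mul a).
Proof.
by apply: (@continuous_mul (fun=> a) id) => [|x]; [exact: cst_continuous | exact: cvg_id].
Qed.

Lemma continuous_mulr (a : G) : continuous (mul^~ a).
Proof.
by apply: (@continuous_mul id (fun=> a)) => [x|]; [exact: cvg_id | exact: cst_continuous].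
Qed.

Lemma Vmin_sym {a x : G} : Vmin a x -> Vmin x a.
Proof.
move=> ax; have swap_cont : continuous (fun y => mul (mul x (inv y)) a).
  apply: (@continuous_mul (fun y => mul x (inv y)) (fun=> a)); last exact: cst_continuous.
  by apply: (@continuous_mul (fun=> x) inv) => //; exact: cst_continuous.
by have := continuous_Vmin swap_cont ax; rewrite /= mulgV mul1g -mulA mulVg mulg1.
Qed.

Lemma finite_open_class_translate (a : G) :
  open (Vmin e) -> finite_set (Vmin e) -> finite_open_class a.
Proof.
move=> oVe fVe; rewrite -[a]mulg1.
have mulK b : cancel (mul b) (mul (inv b)) by move=> x; rewrite mulA mulVg mul1g.
have mulVK b : cancel (mul (inv b)) (mul b) by move=> x; rewrite mulA mulgV mul1g.
apply: (finite_open_class_homeo (mulK a) (mulVK a)); try exact: continuous_mull.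
by split=> // x; apply: Vmin_sym.
Qed.

Section Decomposition.
Hypotheses (oVe : open (Vmin e)) (fVe : finite_set (Vmin e)).

Definition rep (x : G) : G := xget e (Vmin x).

Lemma Vmin_rep (x : G) : Vmin x (rep x).
Proof. exact: (@xgetI _ e (Vmin x) x (Vmin_refl x)). Qed.

Lemma rep_Vmin {x y : G} : Vmin x y -> rep y = rep x.
Proof. by move=> xy; rewrite /rep (Vmin_eq xy (Vmin_sym xy)). Qed.

Lemma repK (x : G) : rep (rep x) = rep x.
Proof. exact: rep_Vmin (Vmin_rep x). Qed.

Lemma rep_mull (x y : G) : rep (mul (rep x) y) = rep (mul x y).
Proof. by apply: rep_Vmin; exact: (continuous_Vmin (continuous_mulr y) (Vmin_rep x)). Qed.

Lemma rep_mulr (x y : G) : rep (mul x (rep y)) = rep (mul x y).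
Proof. by apply: rep_Vmin; exact: (continuous_Vmin (continuous_mull x) (Vmin_rep y)). Qed.

Lemma Vmin_mull (b : G) {x : G} : Vmin e x -> Vmin b (mul b x).
Proof. by move=> ex; have := continuous_Vmin (continuous_mull b) ex; rewrite mulg1. Qed.

Lemma Vmin_e_mul {x y : G} : Vmin e x -> Vmin e y -> Vmin e (mul x y).
Proof.
move=> ex ey; have := continuous_Vmin (continuous_mulr y) ex; rewrite mul1g.
exact: Vmin_trans ey.
Qed.

Lemma Vmin_e_inv {x : G} : Vmin e x -> Vmin e (inv x).
Proof. by move=> ex; have := continuous_Vmin inv_cont ex; rewrite inv1. Qed.

Definition kernel := {x : G | `[< Vmin e x >]}.
(* A set of representatives of the cosets V(x), i.e. a copy of G/V(e). *)
Definition reps := {x : G | `[< rep x = x >]}.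

Lemma Vmin_kernel (a : kernel) : Vmin e (val a).
Proof. exact: asboolW (valP a). Qed.

Lemma rep_reps (b : reps) : rep (val b) = val b.
Proof. exact: asboolW (valP b). Qed.

Definition kernel_of {x : G} (ex : Vmin e x) : kernel := exist _ x (asboolT ex).
Definition rep_of (x : G) : reps := exist _ (rep x) (asboolT (repK x)).

Definition mulE (a b : kernel) := kernel_of (Vmin_e_mul (Vmin_kernel a) (Vmin_kernel b)).
Definition invE (a : kernel) := kernel_of (Vmin_e_inv (Vmin_kernel a)).
Definition mulF (a b : reps) := rep_of (mul (val a) (val b)).
Definition invF (a : reps) := rep_of (inv (val a)).

Let E := indiscrete_topology kernel.
Let F := discrete_topology reps.

Lemma kernel_topgroup : is_topgroup (T := E) mulE invE (kernel_of (Vmin_refl e)).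
Proof.
split.
- by move=> a b c; apply: val_inj; rewrite /= mulA.
- by move=> a; split; apply: val_inj; rewrite /= ?mul1g ?mulg1.
- by move=> a; split; apply: val_inj; rewrite /= ?mulVg ?mulgV.
- by apply: continuous_to_indiscrete; exact: indiscrete_topologyP.
- by apply: continuous_to_indiscrete; exact: indiscrete_topologyP.
Qed.

Lemma reps_topgroup : is_topgroup (T := F) mulF invF (rep_of e).
Proof.
split.
- by move=> a b c; apply: val_inj; rewrite /= rep_mulr rep_mull mulA.
- move=> a; split; apply: val_inj;
    by rewrite /= ?rep_mull ?rep_mulr ?mul1g ?mulg1 rep_reps.
- by move=> a; split; apply: val_inj; rewrite /= ?rep_mull ?rep_mulr ?mulVg ?mulgV.
- by apply: continuous_from_discrete; apply: discrete_prod; exact: discrete_topologyP.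
- by apply: continuous_from_discrete; exact: discrete_topologyP.
Qed.

Let VminEF (a : E) (y : F) : Vmin (a, y) = setT `*` [set y].
Proof.
exact: Vmin_indiscrete_discrete (indiscrete_topologyP _) (discrete_topologyP _).
Qed.

Lemma finite_kernel : finite_set [set: E].
Proof.
apply: (sub_finite_set _ (finite_image (insubd (kernel_of (Vmin_refl e))) fVe)).
by move=> a _; exists (val a); [exact: Vmin_kernel | exact: valKd].
Qed.

Lemma Vmin_e_rep (x : G) : Vmin e (mul (inv (rep x)) x).
Proof.
have := continuous_Vmin (continuous_mull (inv (rep x))) (Vmin_sym (Vmin_rep x)).
by rewrite /= mulVg.
Qed.

Definition mul_pair (p : E * F) : G := mul (val p.2) (val p.1).
Definition decompose (x : G) : E * F := (kernel_of (Vmin_e_rep x), rep_of x).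

Lemma mul_pairK : cancel mul_pair decompose.
Proof.
move=> [a b]; have rep_ba : rep (mul (val b) (val a)) = val b.
  by rewrite (rep_Vmin (Vmin_mull (val b) (Vmin_kernel a))) rep_reps.
by congr pair; apply: val_inj; rewrite /= rep_ba // mulA mulVg mul1g.
Qed.

Lemma decomposeK : cancel decompose mul_pair.
Proof. by move=> x; rewrite /mul_pair /= mulA mulgV mul1g. Qed.

Lemma mul_pair_continuous : continuous mul_pair.
Proof.
apply: Vmin_continuous => [[a y]|[a b] [a' b']].
  by rewrite VminEF; apply: (@open_setX E F); [exact: openT | exact: discrete_topologyP].
rewrite VminEF => -[_ /= ->]; rewrite /mul_pair /=.
exact: Vmin_trans (Vmin_sym (Vmin_mull _ (Vmin_kernel a))) (Vmin_mull _ (Vmin_kernel a')).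
Qed.

Lemma decompose_continuous : continuous decompose.
Proof.
apply: Vmin_continuous => [x|x y xy].
  by case: (finite_open_class_translate x oVe fVe).
by rewrite VminEF; split=> //; apply: val_inj; exact: rep_Vmin xy.
Qed.

Lemma indiscrete_discrete_group_product_of_Vmin : indiscrete_discrete_group_product G.
Proof.
exists E, F, mulE, invE, (kernel_of (Vmin_refl e)), mulF, invF, (rep_of e); split.
- exact: (conj kernel_topgroup reps_topgroup).
- exact: finite_kernel.
- exact: indiscrete_topologyP.
- exact: discrete_topologyP.
- exists mul_pair, decompose; split.
  + exact: mul_pairK.
  + exact: decomposeK.
  + exact: mul_pair_continuous.
  + exact: decompose_continuous.
Qed.

End Decomposition.

End TopologicalGroup.

Theorem mainTheorem11 (G : topologicalType) (mul : G -> G -> G) (inv : G -> G)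
    (e : G) (hG : is_topgroup mul inv e) (k : nat) (hk : (1 <= k)%N) :
  let P1 := functional_alexandroff G in
  let P1' := k_primal k G in
  let P2 := open (Vmin e) /\ finite_set (Vmin e) in
  let P3 := exists (E F : topologicalType)
              (mulE : E -> E -> E) (invE : E -> E) (eE : E)
              (mulF : F -> F -> F) (invF : F -> F) (eF : F),
              [/\ is_topgroup mulE invE eE /\ is_topgroup mulF invF eF,
                  finite_set [set: E], indiscrete E, discrete F &
                  homeomorphic (E * F)%type G] in
  let P4 := exists (E F : topologicalType),
              [/\ finite_set [set: E], indiscrete E, discrete F &
                  homeomorphic (E * F)%type G] in
  [/\ P1 <-> P1', P1 <-> P2, P1 <-> P3 & P1 <-> P4].
Proof.
move=> P1 P1' P2 P3 P4.
have P1_P1' : P1 -> P1' := functional_alexandroff_k_primal hk.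
have P1'_P2 : P1' -> P2 := k_primal_Vmin hk (fun x => Vmin_sym hG).
have P2_P3 : P2 -> P3.
  by case=> oVe fVe; exact: indiscrete_discrete_group_product_of_Vmin hG oVe fVe.
have P3_P4 : P3 -> P4.
  by case=> E [F [_ [_ [_ [_ [_ [_ [_ finE indE discF homeo]]]]]]]]; exists E, F.
have P4_P1 : P4 -> P1.
  by case=> E [F [finE indE discF]]; exact: functional_alexandroff_of_product.
by split; tauto.
Qed.
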